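(* Let $q$ be a prime number, $l\ge 2$ an integer, and $\alpha=\alpha_1/\alpha_2\in\mathbb{Q}\text{-}\mathcal{KS}(q^{l})$. Then $\alpha\in\,]0,1[$ if and only if there exists a positive integer $d$ with $d\mid(q^{l}-q)$ such that $$\alpha=q-\frac{d}{\alpha_2}\quad\text{and}\quad \alpha_2\in\Bigl\{\Bigl\lfloor\frac{d}{q}\Bigr\rfloor+1,\dots,\Bigl\lceil\frac{d}{q-1}\Bigr\rceil-1\Bigr\}.$$
   Context: Every nonzero rational $\alpha$ is written $\alpha=\alpha_1/\alpha_2$ with $\alpha_1\in\mathbb{Z}$, $\alpha_2$ a positive integer and $\gcd(\alpha_1,\alpha_2)=1$. For an integer $N\ge 2$ and a nonzero rational $\alpha=\alpha_1/\alpha_2$, $N$ is called an $\alpha$-Korselt number if $N\neq\alpha$ and $\alpha_2p-\alpha_1$ divides $\alpha_2N-\alpha_1$ (in $\mathbb{Z}$) for every prime divisor $p$ of $N$. $\mathbb{Q}\text{-}\mathcal{KS}(N)$ is the set of all $\beta\in\mathbb{Q}\setminus\{0,N\}$ such that $N$ is a $\beta$-Korselt number. $\lfloor\cdot\rfloor$ and $\lceil\cdot\rceil$ are the floor and ceiling functions; $\{a,\dots,b\}$ is the set of integers from $a$ to $b$ (empty if $a>b$). *)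

From HB Require Import structures.
From mathcomp Require Import all_boot all_order all_algebra.
Set Implicit Arguments. Unset Strict Implicit. Unset Printing Implicit Defensive.
Import Order.TTheory GRing.Theory Num.Theory.
Local Open Scope ring_scope.

(* alpha = alpha1/alpha2 in lowest terms with alpha2 > 0:
   alpha1 = numq alpha, alpha2 = denq alpha. *)

Definition korselt (N : nat) (alpha : rat) : Prop :=
  (N%:R != alpha) /\
  forall p : nat, prime p -> (p %| N)%N ->
    (denq alpha * p%:Z - numq alpha %| denq alpha * N%:Z - numq alpha)%Z.

Definition QKS (N : nat) (beta : rat) : Prop :=
  beta != 0 /\ beta != N%:R /\ korselt N beta.

From HB Require Import structures.
From mathcomp Require Import all_boot all_order all_algebra.
From mathcomp Require Import zify ring.
Import Order.TTheory GRing.Theory Num.Theory.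
Local Open Scope ring_scope.

(* Writing alpha = a1/a2, the Korselt condition at the prime q gives
   (a2 q - a1) | (a2 q^l - a1); since a2 q^l - a1 = a2 (q^l - q) + (a2 q - a1)
   and a2 q - a1 is coprime to a2, this is d | q^l - q for d := a2 q - a1,
   i.e. alpha = q - d/a2.  The two bounds on a2 are exactly the conditions
   d < a2 q and a2 (q - 1) < d, i.e. 0 < a1 and a1 < a2, i.e. 0 < alpha < 1;
   so the converse does not even need d | q^l - q. *)

Lemma floor_divD1_le (R : archiRealFieldType) (m k n : int) : 0 < k ->
  (Num.floor (m%:~R / k%:~R : R) + 1 <= n) = (m < n * k).
Proof.
by move=> k_gt0; rewrite lezD1 floor_lt_int ltr_pdivrMr ?ltr0z // -intrM ltr_int.
Qed.

Lemma le_ceil_divB1 (R : archiRealFieldType) (m k n : int) : 0 < k ->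
  (n <= Num.ceil (m%:~R / k%:~R : R) - 1) = (n * k < m).
Proof.
by move=> k_gt0; rewrite -ltzD1 subrK ceil_gt_int ltr_pdivlMr ?ltr0z // -intrM ltr_int.
Qed.

Lemma rat_gt0_lt1E (alpha : rat) :
  (0 < alpha < 1) = (0 < numq alpha < denq alpha).
Proof.
rewrite numq_gt0 -[in RHS](ltr_int rat) numqE.
by rewrite -[X in _ * _ < X]mul1r ltr_pM2r // ltr0z denq_gt0.
Qed.

Lemma rat_eq_sub_divdenE (alpha : rat) (m d : nat) :
  (alpha = m%:R - d%:R / (denq alpha)%:~R) <-> (numq alpha = denq alpha * m%:Z - d%:Z).
Proof.
have den_neq0 : (denq alpha)%:~R != 0 :> rat by rewrite intr_eq0 denq_neq0.
split=> e.
  by apply: (@intr_inj rat); rewrite numqE intrB intrM {1}e mulrBl divfK // mulrC.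
by rewrite -[in LHS](divq_num_den alpha) e intrB intrM mulrBl [_ * m%:R]mulrC mulfK.
Qed.

Lemma dvdz_sub_korseltE (a1 a2 n p : int) : coprimez a1 a2 ->
  (a2 * p - a1 %| a2 * n - a1)%Z = (a2 * p - a1 %| n - p)%Z.
Proof.
move=> co_a12; have -> : a2 * n - a1 = a2 * (n - p) + (a2 * p - a1) by ring.
rewrite rpredDr ?dvdzz // Gauss_dvdzr // coprimez_sym /coprimez.
have -> : a2 * p - a1 = p * a2 + - a1 by ring.
by rewrite gcdzMDl gcdzN gcdzC.
Qed.

Lemma korselt_dvd_sub {N p : nat} {alpha : rat} :
  korselt N alpha -> prime p -> (p %| N)%N ->
  (denq alpha * p%:Z - numq alpha %| N%:Z - p%:Z)%Z.
Proof.
move=> [_ hK] p_pr p_dvd; rewrite -dvdz_sub_korseltE ?hK //.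
by rewrite coprimezE coprime_num_den.
Qed.

Theorem proposition5p5 (q l : nat) (alpha : rat) :
  prime q -> (2 <= l)%N -> QKS (q ^ l) alpha ->
  ((0 < alpha < 1) <->
   exists d : nat, (0 < d)%N /\ (d %| q ^ l - q)%N /\
     alpha = q%:R - d%:R / (denq alpha)%:~R /\
     Num.floor (d%:R / q%:R : rat) + 1 <= denq alpha <=
       Num.ceil (d%:R / (q%:R - 1) : rat) - 1).
Proof.
move=> q_pr l_ge2 [_ [_ hK]].
have q_gt1 := prime_gt1 q_pr.
have q_dvd_ql : (q %| q ^ l)%N by rewrite dvdn_exp // ltnW.
have q_le_ql : (q <= q ^ l)%N by rewrite dvdn_leq ?expn_gt0 ?prime_gt0.
have := korselt_dvd_sub hK q_pr q_dvd_ql.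
rewrite (subzn q_le_ql) dvdzE /= => dvd_d.
have boundsE (d : nat) :
    (Num.floor (d%:R / q%:R : rat) + 1 <= denq alpha <=
       Num.ceil (d%:R / (q%:R - 1) : rat) - 1) =
    (d%:Z < denq alpha * q%:Z) && (denq alpha * (q%:Z - 1) < d%:Z).
  have -> : (q%:R - 1 : rat) = (q%:Z - 1)%:~R by rewrite intrB.
  by rewrite (floor_divD1_le _ d q) ?(le_ceil_divB1 _ d (q%:Z - 1)) //; lia.
rewrite rat_gt0_lt1E.
split=> [/andP[a1_gt0 a1_lt] | [d [_ [_ [/rat_eq_sub_divdenE e]]]]].
- have [d ed] : exists d : nat, d%:Z = denq alpha * q%:Z - numq alpha.
    by exists `|(denq alpha * q%:Z - numq alpha)%R|%N; rewrite gez0_abs //; nia.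
  rewrite -ed /= in dvd_d.
  exists d; rewrite boundsE; do !split => //; [nia | apply/rat_eq_sub_divdenE | ]; lia.
- by rewrite boundsE; lia.
Qed.
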